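(* Let $f\in\mathcal{S}(\mathbb{R})$ and fix $n\in\{0,1,2,3,\dots\}$. Then $D^{n+\frac1k}f(x)\to D^n f(x)$ as $k\to\infty$, uniformly in $x\in\mathbb{R}$.
   Context: $\mathcal{S}(\mathbb{R})$ is the Schwartz space. The Fourier transform is $\hat f(p)=\frac{1}{\sqrt{2\pi}}\int_{\mathbb{R}}e^{-ipx}f(x)\,dx$. For $\alpha\ge0$, $D^\alpha f(x)=\frac{1}{\sqrt{2\pi}}\int_{\mathbb{R}}e^{ipx}(ip)^\alpha\hat f(p)\,dp$, with $i^\alpha=\cos(\alpha\pi/2)+i\sin(\alpha\pi/2)$ and $(ip)^\alpha=i^\alpha p^\alpha$ for $p\ge0$, $(ip)^\alpha=(-i)^\alpha|p|^\alpha$ for $p<0$ (principal branch). For integer $n$, $D^n f=\frac{d^n f}{dx^n}$. *)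

From Stdlib Require Import Reals.
From Coquelicot Require Import Coquelicot.
Open Scope R_scope.

Definition schwartz_R (g : R -> R) : Prop :=
  (forall (m : nat) (x : R), ex_derive_n g m x) /\
  (forall a b : nat, exists M : R, forall x : R, Rabs (x ^ a * Derive_n g b x) <= M).

Definition schwartz (f : R -> C) : Prop :=
  schwartz_R (fun x => Re (f x)) /\ schwartz_R (fun x => Im (f x)).

Definition cexpi (t : R) : C := (cos t, sin t).

Definition int_R (h : R -> C) : C :=
  @RInt_gen C_R_CompleteNormedModule h (Rbar_locally m_infty) (Rbar_locally p_infty).

Definition fourier (f : R -> C) (p : R) : C :=
  Cmult (RtoC (/ sqrt (2 * PI))) (int_R (fun x => Cmult (cexpi (- (p * x))) (f x))).

(* p^alpha for p >= 0, alpha >= 0, with 0^0 = 1 and 0^alpha = 0 for alpha > 0 *)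
Definition rpow (p alpha : R) : R :=
  if Req_EM_T p 0 then (if Req_EM_T alpha 0 then 1 else 0) else Rpower p alpha.

Definition i_pow (alpha : R) : C := (cos (alpha * PI / 2), sin (alpha * PI / 2)).
Definition mi_pow (alpha : R) : C := (cos (alpha * PI / 2), - sin (alpha * PI / 2)).

(* (ip)^alpha, principal branch *)
Definition ip_pow (p alpha : R) : C :=
  if Rle_dec 0 p then Cmult (i_pow alpha) (RtoC (rpow p alpha))
  else Cmult (mi_pow alpha) (RtoC (rpow (Rabs p) alpha)).

Definition fracD (alpha : R) (f : R -> C) (x : R) : C :=
  Cmult (RtoC (/ sqrt (2 * PI)))
    (int_R (fun p => Cmult (Cmult (cexpi (p * x)) (ip_pow p alpha)) (fourier f p))).

From Stdlib Require Import Reals Lra Lia FunctionalExtensionality.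
From Coquelicot Require Import Coquelicot.
Open Scope R_scope.

(* D^alpha f is the inverse Fourier transform of (ip)^alpha \hat f, so uniformly in x
   |D^(n+nu) f(x) - D^n f(x)| <= (2 pi)^(-1/2) \int |(ip)^(n+nu) - (ip)^n| |\hat f(p)| dp.
   Integrating by parts, p^j \hat f(p) is bounded for every j, so all integrals converge, and
   each is estimated by dominating its integrand by A/(1+p^2) + D/(1+(p/d)^2), whose integral
   is (A + D d) pi.  With y = |p|, |(ip)^(n+nu) - (ip)^n| <= pi nu (y^n + y^(n+1))
   + y^n |y^nu - 1|.  The first term is O(nu).  In the second, y^nu -> 1 uniformly on [d, L];
   for y > L it is at most y^(n+1), which the decay of \hat f turns into O(1/L); for y < d it
   is at most 1, which costs O(d) through the Lorentzian of width d. *)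

Notation is_derive_C := (@is_derive R_AbsRing C_R_NormedModule).

(** * Complex-valued functions of a real variable *)

Lemma Cmod_le_Rabs_Re_add_Im (z : C) : Cmod z <= Rabs (Re z) + Rabs (Im z).
Proof.
  destruct z as [a b]; unfold Cmod, Re, Im; simpl.
  pose proof (Rabs_pos a); pose proof (Rabs_pos b).
  apply Rsqr_incr_0_var; [|lra].
  rewrite Rsqr_sqrt by nra; unfold Rsqr.
  rewrite !Rmult_1_r.
  assert (Rabs a * Rabs a = a * a) by (rewrite <- Rabs_mult; apply Rabs_right; nra).
  assert (Rabs b * Rabs b = b * b) by (rewrite <- Rabs_mult; apply Rabs_right; nra).
  nra.
Qed.

Lemma Cmod_cexpi (t : R) : Cmod (cexpi t) = 1.
Proof.
  unfold cexpi, Cmod; simpl; rewrite !Rmult_1_r, <- sqrt_1; f_equal.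
  pose proof (sin2_cos2 t) as E; unfold Rsqr in E; lra.
Qed.

Lemma Cmod_cexpi_mul (t : R) (z : C) : Cmod (cexpi t * z)%C = Cmod z.
Proof. now rewrite Cmod_mult, Cmod_cexpi, Rmult_1_l. Qed.

Lemma Cmod_imaginary (p : R) : Cmod (0, p) = Rabs p.
Proof.
  unfold Cmod; simpl; rewrite <- sqrt_Rsqr_abs; f_equal; unfold Rsqr; ring.
Qed.

Lemma Rabs_cos_sub_le (a b : R) : Rabs (cos a - cos b) <= Rabs (a - b).
Proof.
  destruct (MVT_abs cos (fun c => - sin c) b a) as [c [-> _]].
  { intros; apply derivable_pt_lim_cos. }
  rewrite Rabs_Ropp; pose proof (SIN_bound c).
  assert (Rabs (sin c) <= 1) by (apply Rabs_le; lra).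
  pose proof (Rabs_pos (a - b)); nra.
Qed.

Lemma Rabs_sin_sub_le (a b : R) : Rabs (sin a - sin b) <= Rabs (a - b).
Proof.
  destruct (MVT_abs sin cos b a) as [c [-> _]].
  { intros; apply derivable_pt_lim_sin. }
  pose proof (COS_bound c).
  assert (Rabs (cos c) <= 1) by (apply Rabs_le; lra).
  pose proof (Rabs_pos (a - b)); nra.
Qed.

Lemma Cmod_cexpi_sub_le (a b : R) : Cmod (cexpi a - cexpi b) <= 2 * Rabs (a - b).
Proof.
  eapply Rle_trans; [apply Cmod_le_Rabs_Re_add_Im|].
  unfold cexpi, Re, Im; simpl.
  pose proof (Rabs_cos_sub_le a b); pose proof (Rabs_sin_sub_le a b).
  unfold Rminus in *; lra.
Qed.

(* [C] carries two uniform structures: the product one (of [C_R_NormedModule],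
   used by integrals) and the one of the absolute value (of [C_AbsRing], used
   by the algebraic continuity lemmas); [locally_C] identifies their filters. *)
Lemma continuous_C_AbsRing {U : UniformSpace} (u : U -> C) (x : U) :
  @continuous U (AbsRing_UniformSpace C_AbsRing) u x <-> continuous u x.
Proof. split; intros Hu P HP; apply Hu, locally_C, HP. Qed.

Lemma continuous_Cmult (u v : R -> C) (x : R) :
  continuous u x -> continuous v x -> continuous (fun t => u t * v t)%C x.
Proof.
  rewrite <- !continuous_C_AbsRing; exact (continuous_mult u v x).
Qed.

Lemma continuous_Cplus (u v : R -> C) (x : R) :
  continuous u x -> continuous v x -> continuous (fun t => u t + v t)%C x.
Proof.
  rewrite <- !continuous_C_AbsRing.
  exact (@continuous_plus R_UniformSpace C_AbsRing (AbsRing_NormedModule C_AbsRing) u v x).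
Qed.

Lemma continuous_C_of_Cmod (u : R -> C) (x : R) :
  (forall eps, 0 < eps -> exists delta, 0 < delta /\
     forall y, Rabs (y - x) < delta -> Cmod (u y - u x) < eps) ->
  continuous u x.
Proof.
  intros Hu; apply continuous_C_AbsRing, filterlim_locally; intros eps.
  destruct (Hu eps (cond_pos eps)) as [delta [Hdelta Hy]].
  exists (mkposreal delta Hdelta); intros y Hxy; exact (Hy y Hxy).
Qed.

Lemma is_derive_C_pair (u v : R -> R) (x du dv : R) :
  is_derive u x du -> is_derive v x dv ->
  is_derive_C (fun t => (u t, v t)) x (du, dv).
Proof.
  intros Hu Hv.
  apply (filterdiff_comp'_2 u v pair x _ _ pair Hu Hv).
  apply (filterdiff_ext_lin _ (fun t => t)); [|now intros []].
  apply (filterdiff_ext (fun t => t)); [now intros []|apply filterdiff_id].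
Qed.

Lemma is_derive_Re (u : R -> C) (x : R) (du : C) :
  is_derive_C u x du -> is_derive (fun t => Re (u t)) x (Re du).
Proof.
  intros Hu; apply (filterdiff_comp' u fst x _ fst Hu).
  apply filterdiff_linear, is_linear_fst.
Qed.

Lemma is_derive_Im (u : R -> C) (x : R) (du : C) :
  is_derive_C u x du -> is_derive (fun t => Im (u t)) x (Im du).
Proof.
  intros Hu; apply (filterdiff_comp' u snd x _ snd Hu).
  apply filterdiff_linear, is_linear_snd.
Qed.

Lemma is_derive_Cmult (u v : R -> C) (x : R) (du dv : C) :
  is_derive_C u x du ->
  is_derive_C v x dv ->
  is_derive_C (fun t => u t * v t)%C x (du * v x + u x * dv)%C.
Proof.
  intros Hu Hv.
  pose proof (is_derive_Re u x du Hu) as Hur; pose proof (is_derive_Im u x du Hu) as Hui.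
  pose proof (is_derive_Re v x dv Hv) as Hvr; pose proof (is_derive_Im v x dv Hv) as Hvi.
  eapply is_derive_ext; [intros t; symmetry; apply surjective_pairing|].
  replace (du * v x + u x * dv)%C with
    (Re du * Re (v x) + Re (u x) * Re dv - (Im du * Im (v x) + Im (u x) * Im dv),
     Re du * Im (v x) + Re (u x) * Im dv + (Im du * Re (v x) + Im (u x) * Re dv))
    by (destruct du, dv, (u x), (v x); unfold Cplus, Cmult, Re, Im; simpl; f_equal; ring).
  apply is_derive_C_pair.
  - exact (is_derive_minus _ _ _ _ _ (is_derive_mult _ _ _ _ _ Hur Hvr Rmult_comm)
                                     (is_derive_mult _ _ _ _ _ Hui Hvi Rmult_comm)).
  - exact (is_derive_plus _ _ _ _ _ (is_derive_mult _ _ _ _ _ Hur Hvi Rmult_comm)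
                                    (is_derive_mult _ _ _ _ _ Hui Hvr Rmult_comm)).
Qed.

Lemma is_derive_cexpi_comp (w : R -> R) (x dw : R) :
  is_derive w x dw ->
  is_derive_C (fun t => cexpi (w t)) x ((0, dw) * cexpi (w x))%C.
Proof.
  intros Hw; unfold cexpi.
  replace ((0, dw) * (cos (w x), sin (w x)))%C with (dw * - sin (w x), dw * cos (w x))
    by (unfold Cmult; simpl; f_equal; ring).
  apply is_derive_C_pair.
  - apply (is_derive_comp cos w); [auto_derive; auto; ring|exact Hw].
  - apply (is_derive_comp sin w); [auto_derive; auto; ring|exact Hw].
Qed.

Lemma continuous_cexpi_comp (w : R -> R) (x : R) :
  ex_derive w x -> continuous (fun t => cexpi (w t)) x.
Proof.
  intros [dw Hw]; apply (@ex_derive_continuous R_AbsRing C_R_NormedModule).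
  eexists; apply is_derive_cexpi_comp, Hw.
Qed.

(** * Improper integrals over the real line *)

Notation at_m_infty := (Rbar_locally m_infty).
Notation at_p_infty := (Rbar_locally p_infty).

Lemma eventually_le_at_m_infty_at_p_infty :
  filter_prod at_m_infty at_p_infty (fun ab => fst ab <= snd ab).
Proof.
  apply (Filter_prod _ _ _ (fun a => a < 0) (fun b => 0 < b)).
  - exists 0; auto.
  - exists 0; auto.
  - simpl; intros; lra.
Qed.

Section MajorantWithLimits.

Context {V : CompleteNormedModule R_AbsRing}.
Variables (g : R -> V) (h H : R -> R) (lm lp : R).
Hypothesis g_integrable : forall a b, ex_RInt g a b.
Hypothesis H_derive : forall x, is_derive H x (h x).
Hypothesis h_continuous : forall x, continuous h x.
Hypothesis norm_g_le : forall x, norm (g x) <= h x.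
Hypothesis H_at_m_infty : filterlim H at_m_infty (locally lm).
Hypothesis H_at_p_infty : filterlim H at_p_infty (locally lp).

Lemma is_RInt_majorant (a b : R) : is_RInt h a b (H b - H a).
Proof. apply (is_RInt_derive H h); auto. Qed.

Lemma norm_RInt_le_majorant (a b : R) : norm (RInt g a b) <= Rabs (H b - H a).
Proof.
  assert (Hle : forall a b, a <= b -> norm (RInt g a b) <= H b - H a).
  { intros a' b' Hab; apply (norm_RInt_le g h a' b' _ _ Hab); auto.
    - apply RInt_correct, g_integrable.
    - apply is_RInt_majorant. }
  destruct (Rle_or_lt a b) as [Hab|Hba].
  - eapply Rle_trans; [apply Hle, Hab|apply Rle_abs].
  - rewrite <- (opp_RInt_swap g b a) by auto.
    rewrite (@norm_opp R_AbsRing V), Rabs_minus_sym.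
    eapply Rle_trans; [apply Hle; lra|apply Rle_abs].
Qed.

Lemma ex_RInt_gen_of_majorant : ex_RInt_gen g at_m_infty at_p_infty.
Proof.
  unfold ex_RInt_gen, is_RInt_gen.
  apply (filterlimi_locally_cauchy (U := V) (fun ab => is_RInt g (fst ab) (snd ab))).
  { apply filter_forall; intros [a b]; split.
    - apply g_integrable.
    - intros y1 y2 H1 H2; simpl in *.
      now rewrite <- (is_RInt_unique _ _ _ _ H1), <- (is_RInt_unique _ _ _ _ H2). }
  (* Two integrals over nearby intervals differ by the integrals over the two tails between
     their endpoints, which the variation of H there controls. *)
  intros eps.
  assert (Heps : 0 < eps / 4) by (pose proof (cond_pos eps); lra).
  pose proof (proj1 (filterlim_locally _ _) H_at_m_infty (mkposreal _ Heps)) as Hm.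
  pose proof (proj1 (filterlim_locally _ _) H_at_p_infty (mkposreal _ Heps)) as Hp.
  exists (fun ab => ball lm (mkposreal _ Heps) (H (fst ab))
                 /\ ball lp (mkposreal _ Heps) (H (snd ab))).
  split; [exact (Filter_prod _ _ _ _ _ Hm Hp (fun a b Ha Hb => conj Ha Hb))|].
  intros [u1 u2] [v1 v2] [Hu1 Hu2] [Hv1 Hv2] u' v' Hu Hv; simpl in *.
  rewrite <- (is_RInt_unique _ _ _ _ Hu), <- (is_RInt_unique _ _ _ _ Hv).
  apply (@norm_compat1 R_AbsRing V).
  assert (Hsplit : minus (RInt g v1 v2) (RInt g u1 u2) = plus (RInt g v1 u1) (RInt g u2 v2)).
  { rewrite <- (RInt_Chasles g v1 u1 v2), <- (RInt_Chasles g u1 u2 v2) by auto.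
    unfold minus; rewrite (plus_comm (RInt g u1 u2) (RInt g u2 v2)), plus_assoc.
    now rewrite <- plus_assoc, (@plus_opp_r V), (@plus_zero_r V). }
  eapply Rle_lt_trans; [apply Req_le, (f_equal (@norm R_AbsRing V) Hsplit)|].
  eapply Rle_lt_trans; [apply (@norm_triangle R_AbsRing V)|].
  pose proof (norm_RInt_le_majorant v1 u1); pose proof (norm_RInt_le_majorant u2 v2).
  unfold ball in Hu1, Hu2, Hv1, Hv2; simpl in *.
  unfold AbsRing_ball, abs, minus, plus, opp in *; simpl in *.
  apply Rabs_def2 in Hu1; apply Rabs_def2 in Hv1; apply Rabs_def2 in Hu2; apply Rabs_def2 in Hv2.
  assert (Rabs (H u1 - H v1) < eps / 2) by (apply Rabs_def1; lra).
  assert (Rabs (H v2 - H u2) < eps / 2) by (apply Rabs_def1; lra).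
  lra.
Qed.

Lemma norm_is_RInt_gen_le_majorant (l : V) :
  is_RInt_gen g at_m_infty at_p_infty l -> norm l <= lp - lm.
Proof.
  intros Hl.
  assert (Hh : is_RInt_gen h at_m_infty at_p_infty (lp - lm)).
  { replace h with (Derive H)
      by (apply functional_extensionality; intros x; apply is_derive_unique, H_derive).
    apply is_RInt_gen_Derive; auto; apply filter_forall; intros ab x _.
    - eexists; apply H_derive.
    - rewrite (functional_extensionality (Derive H) h)
        by (intros y; apply is_derive_unique, H_derive).
      apply h_continuous. }
  apply (RInt_gen_norm g h l (lp - lm)); [| |exact Hl|exact Hh].
  - apply eventually_le_at_m_infty_at_p_infty.
  - apply filter_forall; intros ab x _; apply norm_g_le.
Qed.

End MajorantWithLimits.

Lemma atan_gt_PI2_sub (e : R) : 0 < e -> exists M, forall y, M < y -> PI / 2 - e < atan y.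
Proof.
  intros He; pose proof PI_RGT_0.
  set (e' := Rmin e (PI / 4)).
  assert (0 < e') by (apply Rmin_glb_lt; lra).
  assert (e' <= e) by apply Rmin_l; assert (e' <= PI / 4) by apply Rmin_r.
  exists (tan (PI / 2 - e')); intros y Hy.
  apply atan_increasing in Hy; rewrite atan_tan in Hy by lra; lra.
Qed.

Lemma is_lim_atan_scaled (s : R) : 0 < s ->
  is_lim (fun x => atan (x / s)) p_infty (PI / 2) /\
  is_lim (fun x => atan (x / s)) m_infty (- (PI / 2)).
Proof.
  intros Hs.
  assert (Hp : forall e, 0 < e -> exists M, forall x, M < x -> Rabs (atan (x / s) - PI / 2) < e).
  { intros e He; destruct (atan_gt_PI2_sub e He) as [M HM].
    exists (M * s); intros x Hx.
    assert (M < x / s) by (apply Rmult_lt_reg_r with s; [lra|]; field_simplify; lra).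
    pose proof (HM _ H); pose proof (atan_bound (x / s)).
    apply Rabs_def1; lra. }
  split; apply is_lim_spec; intros e.
  - destruct (Hp e (cond_pos e)) as [M HM]; exists M; exact HM.
  - destruct (Hp e (cond_pos e)) as [M HM]; exists (- M); intros x Hx.
    replace (x / s) with (- (- x / s)) by (field; lra).
    rewrite atan_opp, <- Rabs_Ropp; replace (- (- atan (- x / s) - - (PI / 2))) with
      (atan (- x / s) - PI / 2) by ring.
    apply HM; lra.
Qed.

Lemma is_derive_atan_scaled (s x : R) : 0 < s ->
  is_derive (fun t => s * atan (t / s)) x (/ (1 + (x / s) ^ 2)).
Proof. intros Hs; auto_derive; [auto|field; split; [lra|nra]]. Qed.

Section LorentzMajorant.

Context {V : CompleteNormedModule R_AbsRing}.

Lemma ex_RInt_gen_of_lorentz_bound (g : R -> V) (K : R) :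
  (forall a b, ex_RInt g a b) -> (forall x, norm (g x) <= K / (1 + x ^ 2)) ->
  ex_RInt_gen g at_m_infty at_p_infty.
Proof.
  intros Hint Hg; destruct (is_lim_atan_scaled 1 Rlt_0_1) as [Hp Hm].
  apply (ex_RInt_gen_of_majorant g (fun x => K * / (1 + (x / 1) ^ 2))
           (fun x => K * (1 * atan (x / 1))) (K * (1 * - (PI / 2))) (K * (1 * (PI / 2)))); auto.
  - intros x; apply is_derive_scal, is_derive_atan_scaled, Rlt_0_1.
  - intros x; apply (@ex_derive_continuous R_AbsRing R_NormedModule); auto_derive; nra.
  - intros x; unfold Rdiv in Hg; rewrite Rdiv_1_r; apply Hg.
  - exact (is_lim_scal_l _ _ _ _ (is_lim_scal_l _ _ _ _ Hm)).
  - exact (is_lim_scal_l _ _ _ _ (is_lim_scal_l _ _ _ _ Hp)).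
Qed.

Lemma norm_is_RInt_gen_le_lorentz (g : R -> V) (A D s : R) (l : V) : 0 < s ->
  is_RInt_gen g at_m_infty at_p_infty l ->
  (forall x, norm (g x) <= A / (1 + x ^ 2) + D / (1 + (x / s) ^ 2)) ->
  norm l <= (A + D * s) * PI.
Proof.
  intros Hs Hl Hg.
  destruct (is_lim_atan_scaled 1 Rlt_0_1) as [Hp1 Hm1].
  destruct (is_lim_atan_scaled s Hs) as [Hps Hms].
  replace ((A + D * s) * PI) with
    ((A * (1 * (PI / 2)) + D * (s * (PI / 2))) - (A * (1 * - (PI / 2)) + D * (s * - (PI / 2))))
    by field.
  apply (norm_is_RInt_gen_le_majorant g
           (fun x => A * / (1 + (x / 1) ^ 2) + D * / (1 + (x / s) ^ 2))
           (fun x => A * (1 * atan (x / 1)) + D * (s * atan (x / s)))); auto.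
  - intros x; exact (is_derive_plus _ _ _ _ _
      (is_derive_scal _ _ A _ (is_derive_atan_scaled 1 x Rlt_0_1))
      (is_derive_scal _ _ D _ (is_derive_atan_scaled s x Hs))).
  - intros x; apply (@ex_derive_continuous R_AbsRing R_NormedModule); auto_derive.
    repeat split; apply Rgt_not_eq, Rlt_gt; nra.
  - intros x; rewrite Rdiv_1_r; apply Hg.
  - exact (is_lim_plus' _ _ _ _ _ (is_lim_scal_l _ _ _ _ (is_lim_scal_l _ _ _ _ Hm1))
                                   (is_lim_scal_l _ _ _ _ (is_lim_scal_l _ _ _ _ Hms))).
  - exact (is_lim_plus' _ _ _ _ _ (is_lim_scal_l _ _ _ _ (is_lim_scal_l _ _ _ _ Hp1))
                                   (is_lim_scal_l _ _ _ _ (is_lim_scal_l _ _ _ _ Hps))).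
Qed.

End LorentzMajorant.

Lemma filterlim_zero_of_lorentz_bound {V : NormedModule R_AbsRing} (v : R -> V) (K : R) :
  (forall x, norm (v x) <= K / (1 + x ^ 2)) ->
  filterlim v at_m_infty (locally (@zero V)) /\ filterlim v at_p_infty (locally (@zero V)).
Proof.
  intros Hv.
  assert (Hsmall : forall (eps : posreal) x,
            Rabs K / eps + 1 < Rabs x -> ball (@zero V) eps (v x)).
  { intros eps x Hx; apply (@norm_compat1 R_AbsRing V); rewrite (@minus_zero_r V).
    pose proof (cond_pos eps); pose proof (Rabs_pos K); pose proof (Rle_abs K).
    assert (Habs : Rabs x * Rabs x = x ^ 2) by (rewrite <- pow2_abs; ring).
    assert (Rabs K = eps * (Rabs K / eps)) by (field; lra).
    assert (eps * (Rabs K / eps) < eps * Rabs x) by (apply Rmult_lt_compat_l; lra).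
    eapply Rle_lt_trans; [apply Hv|].
    apply Rmult_lt_reg_r with (1 + x ^ 2); [nra|].
    assert (Rabs x <= 1 + x ^ 2) by nra.
    unfold Rdiv; rewrite Rmult_assoc, Rinv_l, Rmult_1_r by nra; nra. }
  split; apply filterlim_locally; intros eps.
  all: assert (0 <= Rabs K / eps) by (apply Rdiv_le_0_compat; [apply Rabs_pos|apply cond_pos]).
  - exists (- (Rabs K / eps + 1)); intros x Hx; apply Hsmall.
    rewrite (Rabs_left x); lra.
  - exists (Rabs K / eps + 1); intros x Hx; apply Hsmall; pose proof (Rle_abs x); lra.
Qed.

Lemma is_RInt_gen_derive_vanishing {V : CompleteNormedModule R_AbsRing} (v dv : R -> V) :
  (forall x, is_derive v x (dv x)) -> (forall x, continuous dv x) ->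
  filterlim v at_m_infty (locally (@zero V)) -> filterlim v at_p_infty (locally (@zero V)) ->
  is_RInt_gen dv at_m_infty at_p_infty (@zero V).
Proof.
  intros Hv Hdv Hm Hp.
  apply (filterlimi_lim_ext (fun ab => minus (v (snd ab)) (v (fst ab)))).
  - intros [a b]; apply is_RInt_derive; auto.
  - replace (@zero V) with (@minus V zero zero) by apply minus_zero_r.
    apply (filterlim_comp_2 (G := locally (@zero V)) (H := locally (@zero V))
             (fun ab => v (snd ab)) (fun ab => v (fst ab)) minus).
    + eapply filterlim_comp; [apply filterlim_snd|exact Hp].
    + eapply filterlim_comp; [apply filterlim_fst|exact Hm].
    + apply (filterlim_comp_2 (G := locally (@zero V)) (H := locally (@opp V zero))
             fst (fun z => opp (snd z)) plus).
      * apply filterlim_fst.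
      * eapply filterlim_comp; [apply filterlim_snd|apply (@filterlim_opp R_AbsRing V)].
      * apply (@filterlim_plus R_AbsRing V).
Qed.

Lemma is_RInt_Cmult_l (u : R -> C) (a b : R) (c l : C) :
  @is_RInt C_R_NormedModule u a b l ->
  @is_RInt C_R_NormedModule (fun x => c * u x)%C a b (c * l)%C.
Proof.
  intros Hu.
  pose proof (is_RInt_fct_extend_fst _ _ _ _ Hu) as Hre.
  pose proof (is_RInt_fct_extend_snd _ _ _ _ Hu) as Him.
  eapply is_RInt_ext; [intros x _; symmetry; apply surjective_pairing|].
  replace (c * l)%C with (Re c * Re l - Im c * Im l, Re c * Im l + Im c * Re l)
    by (destruct c, l; unfold Cmult, Re, Im; simpl; f_equal; ring).
  apply is_RInt_fct_extend_pair; simpl.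
  - exact (is_RInt_minus _ _ _ _ _ _ (is_RInt_scal _ _ _ (Re c) _ Hre)
                                     (is_RInt_scal _ _ _ (Im c) _ Him)).
  - exact (is_RInt_plus _ _ _ _ _ _ (is_RInt_scal _ _ _ (Re c) _ Him)
                                    (is_RInt_scal _ _ _ (Im c) _ Hre)).
Qed.

Lemma filterlim_Cmult_l (c l : C) :
  filterlim (fun z => c * z)%C (locally l) (locally (c * l)%C).
Proof.
  intros P HP; apply locally_C in HP; apply locally_C.
  exact (@continuous_mult (AbsRing_UniformSpace C_AbsRing) C_AbsRing (fun _ => c) (fun z => z) l
           (filterlim_const _) (filterlim_id _ _) P HP).
Qed.

Lemma is_RInt_gen_Cmult_l (u : R -> C) (c l : C) :
  @is_RInt_gen C_R_NormedModule u at_m_infty at_p_infty l ->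
  @is_RInt_gen C_R_NormedModule (fun x => c * u x)%C at_m_infty at_p_infty (c * l)%C.
Proof.
  intros Hu P HP; apply filterlim_Cmult_l, Hu in HP.
  unfold filtermapi in *; revert HP; apply filter_imp; intros ab [z [Hz HPz]].
  exists (c * z)%C; split; [apply is_RInt_Cmult_l, Hz|exact HPz].
Qed.



(** * The Fourier integral *)

Definition fourier_integral (u : R -> C) (p : R) : C :=
  int_R (fun x => cexpi (- (p * x)) * u x)%C.

Lemma is_RInt_gen_fourier_integral (u : R -> C) (K p : R) :
  (forall x, continuous u x) -> (forall x, Cmod (u x) <= K / (1 + x ^ 2)) ->
  @is_RInt_gen C_R_NormedModule (fun x => cexpi (- (p * x)) * u x)%C at_m_infty at_p_infty
    (fourier_integral u p).
Proof.
  intros Hu HK; apply (@RInt_gen_correct C_R_CompleteNormedModule);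
    [apply Proper_StrongProper, Rbar_locally_filter..|].
  apply (ex_RInt_gen_of_lorentz_bound _ K).
  - intros a b; apply (@ex_RInt_continuous C_R_CompleteNormedModule); intros x _.
    apply continuous_Cmult; [apply continuous_cexpi_comp; auto_derive|]; auto.
  - intros x; rewrite <- Cmod_norm, Cmod_cexpi_mul; apply HK.
Qed.

Lemma Cmod_fourier_integral_le (u : R -> C) (K p : R) :
  (forall x, continuous u x) -> (forall x, Cmod (u x) <= K / (1 + x ^ 2)) ->
  Cmod (fourier_integral u p) <= K * PI.
Proof.
  intros Hu HK; rewrite Cmod_norm; replace (K * PI) with ((K + 0 * 1) * PI) by ring.
  apply (@norm_is_RInt_gen_le_lorentz C_R_CompleteNormedModule _ K 0 1 _ Rlt_0_1
           (is_RInt_gen_fourier_integral u K p Hu HK)).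
  intros x; rewrite <- Cmod_norm, Cmod_cexpi_mul, Rdiv_0_l, Rplus_0_r; apply HK.
Qed.

Lemma Cmod_fourier_integral_sub_le (u : R -> C) (K K1 p q : R) :
  (forall x, continuous u x) -> (forall x, Cmod (u x) <= K / (1 + x ^ 2)) ->
  (forall x, Rabs x * Cmod (u x) <= K1 / (1 + x ^ 2)) ->
  Cmod (fourier_integral u p - fourier_integral u q)%C <= 2 * K1 * PI * Rabs (p - q).
Proof.
  intros Hu HK HK1; rewrite Cmod_norm.
  replace (2 * K1 * PI * Rabs (p - q)) with ((2 * Rabs (p - q) * K1 + 0 * 1) * PI) by ring.
  apply (@norm_is_RInt_gen_le_lorentz C_R_CompleteNormedModule _ _ _ _ _ Rlt_0_1
           (is_RInt_gen_minus _ _ _ _ (is_RInt_gen_fourier_integral u K p Hu HK)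
                                      (is_RInt_gen_fourier_integral u K q Hu HK))).
  intros x; rewrite <- Cmod_norm, Rdiv_0_l, Rplus_0_r.
  change (Cmod (cexpi (- (p * x)) * u x - cexpi (- (q * x)) * u x)%C
            <= 2 * Rabs (p - q) * K1 / (1 + x ^ 2)).
  replace (cexpi (- (p * x)) * u x - cexpi (- (q * x)) * u x)%C
    with ((cexpi (- (p * x)) - cexpi (- (q * x))) * u x)%C by ring.
  rewrite Cmod_mult.
  pose proof (Cmod_cexpi_sub_le (- (p * x)) (- (q * x))) as Hlip.
  replace (- (p * x) - - (q * x)) with (- ((p - q) * x)) in Hlip by ring.
  rewrite Rabs_Ropp, Rabs_mult in Hlip.
  pose proof (HK1 x); pose proof (Cmod_ge_0 (u x)); pose proof (Rabs_pos (p - q)).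
  apply Rle_trans with (2 * Rabs (p - q) * (Rabs x * Cmod (u x))).
  - replace (2 * Rabs (p - q) * (Rabs x * Cmod (u x)))
      with (2 * (Rabs (p - q) * Rabs x) * Cmod (u x)) by ring.
    apply Rmult_le_compat_r; auto.
  - replace (2 * Rabs (p - q) * K1 / (1 + x ^ 2)) with (2 * Rabs (p - q) * (K1 / (1 + x ^ 2)))
      by (unfold Rdiv; ring).
    apply Rmult_le_compat_l; [lra|exact (HK1 x)].
Qed.

Lemma fourier_integral_derive (u du : R -> C) (K K' p : R) :
  (forall x, is_derive_C u x (du x)) -> (forall x, continuous du x) ->
  (forall x, Cmod (u x) <= K / (1 + x ^ 2)) -> (forall x, Cmod (du x) <= K' / (1 + x ^ 2)) ->
  fourier_integral du p = Cmult (0, p) (fourier_integral u p).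
Proof.
  intros Hu Hdu HK HK'.
  assert (Hcu : forall x, continuous u x)
    by (intros x; apply (@ex_derive_continuous R_AbsRing C_R_NormedModule); eexists; apply Hu).
  set (e := fun x => cexpi (- (p * x))).
  set (mip := (0, - p) : C).
  set (dv := fun x => plus (mip * (e x * u x))%C (e x * du x)%C).
  assert (Hdv : forall x, is_derive_C (fun t => e t * u t)%C x (dv x)).
  { intros x.
    replace (dv x) with (mip * e x * u x + e x * du x)%C
      by (unfold dv; rewrite Cmult_assoc; reflexivity).
    apply is_derive_Cmult; [|apply Hu].
    apply is_derive_cexpi_comp; auto_derive; [exact I|ring]. }
  assert (Hzero : @is_RInt_gen C_R_NormedModule dv at_m_infty at_p_infty zero).
  { assert (Hce : forall x, continuous e x)
      by (intros x; apply continuous_cexpi_comp; auto_derive; auto).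
    destruct (@filterlim_zero_of_lorentz_bound C_R_NormedModule (fun t => e t * u t)%C K)
      as [Hm Hp].
    { intros x; rewrite <- Cmod_norm; unfold e; rewrite Cmod_cexpi_mul; apply HK. }
    apply (@is_RInt_gen_derive_vanishing C_R_CompleteNormedModule (fun t => e t * u t)%C); auto.
    intros x; apply continuous_Cplus; apply continuous_Cmult; auto.
    - apply continuous_const.
    - apply continuous_Cmult; auto. }
  pose proof (is_RInt_gen_plus _ _ _ _
    (is_RInt_gen_Cmult_l _ mip _ (is_RInt_gen_fourier_integral u K p Hcu HK))
    (is_RInt_gen_fourier_integral du K' p Hdu HK')) as Hsum.
  apply (@is_RInt_gen_unique C_R_CompleteNormedModule) in Hzero, Hsum;
    [|apply Proper_StrongProper, Rbar_locally_filter..].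
  assert (E : (mip * fourier_integral u p + fourier_integral du p)%C = 0%C)
    by (etransitivity; [symmetry; exact Hsum|exact Hzero]).
  replace (fourier_integral du p)
    with (mip * fourier_integral u p + fourier_integral du p + (0, p) * fourier_integral u p)%C.
  - rewrite E; ring.
  - replace mip with (- (0, p))%C by (unfold mip, Copp; simpl; f_equal; ring); ring.
Qed.

(** * Schwartz functions and the decay of their Fourier transforms *)

Lemma lorentz_bound_of_pow_bounds (x c P1 P2 : R) (m : nat) :
  Rabs x ^ m * c <= P1 -> Rabs x ^ (m + 2) * c <= P2 ->
  Rabs x ^ m * c <= (P1 + P2) / (1 + x ^ 2).
Proof.
  intros H1 H2; rewrite pow_add, pow2_abs in H2.
  apply Rmult_le_reg_r with (1 + x ^ 2); [nra|].
  replace ((P1 + P2) / (1 + x ^ 2) * (1 + x ^ 2)) with (P1 + P2) by (field; nra).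
  nra.
Qed.

Lemma schwartz_R_lorentz_bound (g : R -> R) (a b : nat) : schwartz_R g ->
  exists M, forall x, Rabs x ^ a * Rabs (Derive_n g b x) <= M / (1 + x ^ 2).
Proof.
  intros [_ Hg]; destruct (Hg a b) as [M1 H1], (Hg (a + 2)%nat b) as [M2 H2].
  exists (M1 + M2); intros x; apply lorentz_bound_of_pow_bounds.
  - rewrite RPow_abs, <- Rabs_mult; apply H1.
  - rewrite RPow_abs, <- Rabs_mult; apply H2.
Qed.

Definition Cderive_n (f : R -> C) (j : nat) (x : R) : C :=
  (Derive_n (fun y => Re (f y)) j x, Derive_n (fun y => Im (f y)) j x).

Lemma Cderive_n_O (f : R -> C) : Cderive_n f 0 = f.
Proof. apply functional_extensionality; intros x; unfold Cderive_n; simpl; now destruct (f x). Qed.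

Lemma lorentz_bound_nonneg (g : R -> R) (M : R) :
  (forall x, 0 <= g x) -> (forall x, g x <= M / (1 + x ^ 2)) -> 0 <= M.
Proof.
  intros Hg HM; specialize (Hg 0); specialize (HM 0).
  rewrite pow_i, Rplus_0_r, Rdiv_1_r in HM by lia; lra.
Qed.

Lemma schwartz_weighted_lorentz_bound (f : R -> C) (a j : nat) : schwartz f ->
  exists M, 0 <= M /\ forall x, Rabs x ^ a * Cmod (Cderive_n f j x) <= M / (1 + x ^ 2).
Proof.
  intros [Hre Him].
  destruct (schwartz_R_lorentz_bound _ a j Hre) as [M1 H1].
  destruct (schwartz_R_lorentz_bound _ a j Him) as [M2 H2].
  assert (HM : forall x, Rabs x ^ a * Cmod (Cderive_n f j x) <= (M1 + M2) / (1 + x ^ 2)).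
  2:{ exists (M1 + M2); split; [|exact HM].
      apply (lorentz_bound_nonneg _ _
               (fun x => Rmult_le_pos _ _ (pow_le _ a (Rabs_pos x)) (Cmod_ge_0 _)) HM). }
  intros x.
  pose proof (Cmod_le_Rabs_Re_add_Im (Cderive_n f j x)).
  pose proof (pow_le (Rabs x) a (Rabs_pos x)).
  apply Rle_trans with (Rabs x ^ a * (Rabs (Re (Cderive_n f j x)) + Rabs (Im (Cderive_n f j x)))).
  - apply Rmult_le_compat_l; auto.
  - rewrite Rmult_plus_distr_l; specialize (H1 x); specialize (H2 x).
    unfold Rdiv in *; unfold Cderive_n, Re, Im in *; cbn [fst snd] in *.
    rewrite Rmult_plus_distr_r; lra.
Qed.

Lemma schwartz_Cderive_n_lorentz_bound (f : R -> C) (j : nat) : schwartz f ->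
  exists K, 0 <= K /\ forall x, Cmod (Cderive_n f j x) <= K / (1 + x ^ 2).
Proof.
  intros Hf; destruct (schwartz_weighted_lorentz_bound f 0 j Hf) as [K [HK0 HK]].
  exists K; split; [exact HK0|intros x].
  rewrite <- (Rmult_1_l (Cmod _)); apply HK.
Qed.

Lemma is_derive_Cderive_n (f : R -> C) (j : nat) (x : R) : schwartz f ->
  is_derive_C (Cderive_n f j) x (Cderive_n f (S j) x).
Proof.
  intros [[Hre _] [Him _]]; apply is_derive_C_pair; apply Derive_correct;
    [apply (Hre (S j))|apply (Him (S j))].
Qed.

Lemma continuous_Cderive_n (f : R -> C) (j : nat) (x : R) : schwartz f ->
  continuous (Cderive_n f j) x.
Proof.
  intros Hf; apply (@ex_derive_continuous R_AbsRing C_R_NormedModule).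
  eexists; apply is_derive_Cderive_n, Hf.
Qed.


Lemma Cmod_fourier_integral_Cderive_n (f : R -> C) (j : nat) (p : R) : schwartz f ->
  Cmod (fourier_integral (Cderive_n f j) p) = Rabs p ^ j * Cmod (fourier_integral f p).
Proof.
  intros Hf; induction j as [|j IH].
  - now rewrite Cderive_n_O, Rmult_1_l.
  - destruct (schwartz_Cderive_n_lorentz_bound f j Hf) as [K [_ HK]].
    destruct (schwartz_Cderive_n_lorentz_bound f (S j) Hf) as [K' [_ HK']].
    rewrite (fourier_integral_derive (Cderive_n f j) (Cderive_n f (S j)) K K' p); auto.
    + rewrite Cmod_mult, IH, Cmod_imaginary; simpl; ring.
    + intros x; apply is_derive_Cderive_n, Hf.
    + intros x; apply continuous_Cderive_n, Hf.
Qed.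

Lemma inv_sqrt_2PI_bounds : 0 < / sqrt (2 * PI) <= 1.
Proof.
  pose proof PI_RGT_0; pose proof PI2_1.
  split; [apply Rinv_0_lt_compat, sqrt_lt_R0; lra|].
  rewrite <- Rinv_1; apply Rinv_le_contravar; [lra|].
  rewrite <- sqrt_1; apply sqrt_le_1_alt; lra.
Qed.

Lemma Cmod_fourier (f : R -> C) (p : R) :
  Cmod (fourier f p) = / sqrt (2 * PI) * Cmod (fourier_integral f p).
Proof.
  unfold fourier; rewrite Cmod_mult, Cmod_R, Rabs_right; [reflexivity|].
  apply Rle_ge, Rlt_le, inv_sqrt_2PI_bounds.
Qed.

Lemma fourier_pow_bound (f : R -> C) (j : nat) : schwartz f ->
  exists P, forall p, Rabs p ^ j * Cmod (fourier f p) <= P.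
Proof.
  intros Hf; destruct (schwartz_Cderive_n_lorentz_bound f j Hf) as [K [K_nonneg HK]].
  exists (K * PI); intros p; pose proof inv_sqrt_2PI_bounds; pose proof PI_RGT_0.
  rewrite Cmod_fourier.
  replace (Rabs p ^ j * (/ sqrt (2 * PI) * Cmod (fourier_integral f p)))
    with (/ sqrt (2 * PI) * Cmod (fourier_integral (Cderive_n f j) p))
    by (rewrite Cmod_fourier_integral_Cderive_n by exact Hf; ring).
  pose proof (Cmod_fourier_integral_le (Cderive_n f j) K p
                (fun x => continuous_Cderive_n f j x Hf) HK).
  pose proof (Cmod_ge_0 (fourier_integral (Cderive_n f j) p)); nra.
Qed.

Lemma fourier_bounded (f : R -> C) : schwartz f -> exists P, forall p, Cmod (fourier f p) <= P.
Proof.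
  intros Hf; destruct (fourier_pow_bound f 0 Hf) as [P HP].
  exists P; intros p; specialize (HP p); simpl in HP; lra.
Qed.

Lemma fourier_lorentz_bound (f : R -> C) (m : nat) : schwartz f ->
  exists Q, 0 <= Q /\ forall p, Rabs p ^ m * Cmod (fourier f p) <= Q / (1 + p ^ 2).
Proof.
  intros Hf; destruct (fourier_pow_bound f m Hf) as [P1 H1].
  destruct (fourier_pow_bound f (m + 2) Hf) as [P2 H2].
  assert (HQ : forall p, Rabs p ^ m * Cmod (fourier f p) <= (P1 + P2) / (1 + p ^ 2))
    by (intros p; apply lorentz_bound_of_pow_bounds; auto).
  exists (P1 + P2); split; [|exact HQ].
  apply (lorentz_bound_nonneg _ _
           (fun p => Rmult_le_pos _ _ (pow_le _ m (Rabs_pos p)) (Cmod_ge_0 _)) HQ).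
Qed.

Lemma continuous_fourier (f : R -> C) (p : R) : schwartz f -> continuous (fourier f) p.
Proof.
  intros Hf.
  destruct (schwartz_Cderive_n_lorentz_bound f 0 Hf) as [K [_ HK]].
  destruct (schwartz_weighted_lorentz_bound f 1 0 Hf) as [K1 [K1_nonneg HK1]].
  assert (Hcont : forall x, continuous f x)
    by (intros x; rewrite <- (Cderive_n_O f); apply continuous_Cderive_n, Hf).
  rewrite Cderive_n_O in HK, HK1; setoid_rewrite pow_1 in HK1.
  apply continuous_C_of_Cmod; intros eps Heps.
  pose proof PI_RGT_0; pose proof inv_sqrt_2PI_bounds.
  exists (eps / (2 * K1 * PI + 1)); split; [apply Rdiv_lt_0_compat; nra|].
  intros y Hy.
  assert (E : (fourier f y - fourier f p)%C
              = (RtoC (/ sqrt (2 * PI)) * (fourier_integral f y - fourier_integral f p))%C)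
    by (unfold fourier, fourier_integral; ring).
  rewrite E, Cmod_mult, Cmod_R, Rabs_right by lra.
  pose proof (Cmod_fourier_integral_sub_le f K K1 y p Hcont HK HK1).
  pose proof (Cmod_ge_0 (fourier_integral f y - fourier_integral f p)%C).
  assert (2 * K1 * PI * Rabs (y - p) < eps).
  { apply Rle_lt_trans with (2 * K1 * PI * (eps / (2 * K1 * PI + 1))).
    - apply Rmult_le_compat_l; nra.
    - apply Rmult_lt_reg_r with (2 * K1 * PI + 1); [nra|].
      field_simplify; nra. }
  nra.
Qed.

(** * The multiplier [(ip)^alpha] *)

Lemma rpow_nonneg (y a : R) : 0 <= rpow y a.
Proof.
  unfold rpow; destruct (Req_EM_T y 0); [destruct (Req_EM_T a 0); lra|].
  left; apply exp_pos.
Qed.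

Lemma rpow_Rpower (y a : R) : 0 < y -> rpow y a = Rpower y a.
Proof. intros Hy; unfold rpow; destruct (Req_EM_T y 0); [lra|reflexivity]. Qed.

Lemma rpow_0_l (a : R) : 0 < a -> rpow 0 a = 0.
Proof. intros Ha; unfold rpow; destruct (Req_EM_T 0 0), (Req_EM_T a 0); lra. Qed.

Lemma rpow_0_r (y : R) : 0 <= y -> rpow y 0 = 1.
Proof.
  intros Hy; unfold rpow; destruct (Req_EM_T y 0), (Req_EM_T 0 0); try lra.
  apply Rpower_O; lra.
Qed.

Lemma rpow_INR (y : R) (n : nat) : 0 <= y -> rpow y (INR n) = y ^ n.
Proof.
  intros Hy; destruct (Req_dec y 0) as [->|Hy0].
  - destruct n as [|n]; [apply rpow_0_r; lra|].
    rewrite rpow_0_l, pow_i by (try apply lt_0_INR; lia); reflexivity.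
  - rewrite rpow_Rpower by lra; apply Rpower_pow; lra.
Qed.

Lemma Rpower_1_l (a : R) : Rpower 1 a = 1.
Proof. unfold Rpower; now rewrite ln_1, Rmult_0_r, exp_0. Qed.

Lemma Rpower_between_1_and_base (y a : R) : 1 <= y -> 0 <= a <= 1 ->
  1 <= Rpower y a <= y.
Proof.
  intros Hy Ha; split.
  - rewrite <- (Rpower_O y) by lra; apply Rle_Rpower; lra.
  - rewrite <- (Rpower_1 y) at 2 by lra; apply Rle_Rpower; lra.
Qed.

Lemma Rpower_le_1 (y a : R) : 0 < y <= 1 -> 0 <= a -> Rpower y a <= 1.
Proof. intros Hy Ha; rewrite <- (Rpower_1_l a); apply Rle_Rpower_l; lra. Qed.

Lemma rpow_le_pow_add_pow_S (y a : R) (n : nat) : 0 <= y -> INR n <= a <= INR n + 1 ->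
  rpow y a <= y ^ n + y ^ S n.
Proof.
  intros Hy Ha; pose proof (pow_le y n Hy); pose proof (pow_le y (S n) Hy); pose proof (pos_INR n).
  destruct (Req_dec y 0) as [->|Hy0].
  - destruct (Req_dec a 0) as [->|Ha0]; [rewrite rpow_0_r by lra|rewrite rpow_0_l by lra].
    + replace n with 0%nat
        by (destruct n; [reflexivity|rewrite S_INR in Ha; pose proof (pos_INR n); lra]).
      simpl; lra.
    + lra.
  - rewrite rpow_Rpower by lra.
    replace a with (INR n + (a - INR n)) by ring.
    rewrite Rpower_plus, Rpower_pow by lra; simpl.
    destruct (Rle_or_lt y 1).
    + pose proof (Rpower_le_1 y (a - INR n) ltac:(lra) ltac:(lra)); nra.
    + pose proof (Rpower_between_1_and_base y (a - INR n) ltac:(lra) ltac:(lra)); nra.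
Qed.

Definition ip_phase (p a : R) : C :=
  cexpi (if Rle_dec 0 p then a * PI / 2 else - (a * PI / 2)).

Lemma ip_pow_polar (p a : R) : ip_pow p a = (ip_phase p a * RtoC (rpow (Rabs p) a))%C.
Proof.
  unfold ip_pow, ip_phase, i_pow, mi_pow, cexpi.
  destruct (Rle_dec 0 p); [now rewrite Rabs_right by lra|].
  now rewrite cos_neg, sin_neg.
Qed.

Lemma Cmod_ip_pow (p a : R) : Cmod (ip_pow p a) = rpow (Rabs p) a.
Proof.
  rewrite ip_pow_polar; unfold ip_phase; rewrite Cmod_cexpi_mul, Cmod_R.
  apply Rabs_right, Rle_ge, rpow_nonneg.
Qed.

Lemma Cmod_ip_phase_sub (p a b : R) : Cmod (ip_phase p a - ip_phase p b)%C <= PI * Rabs (a - b).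
Proof.
  pose proof PI_RGT_0.
  unfold ip_phase; destruct (Rle_dec 0 p); eapply Rle_trans; try apply Cmod_cexpi_sub_le;
    apply Req_le; [replace (a * PI / 2 - b * PI / 2) with ((a - b) * (PI / 2)) by field
                  |replace (- (a * PI / 2) - - (b * PI / 2)) with (- ((a - b) * (PI / 2))) by field;
                   rewrite Rabs_Ropp];
    rewrite Rabs_mult, (Rabs_right (PI / 2)) by lra; field.
Qed.

Lemma Cmod_ip_pow_sub (p a b : R) :
  Cmod (ip_pow p a - ip_pow p b)%C
  <= PI * Rabs (a - b) * rpow (Rabs p) a + Rabs (rpow (Rabs p) a - rpow (Rabs p) b).
Proof.
  rewrite !ip_pow_polar.
  set (ra := rpow (Rabs p) a); set (rb := rpow (Rabs p) b).
  replace (ip_phase p a * RtoC ra - ip_phase p b * RtoC rb)%C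
    with ((ip_phase p a - ip_phase p b) * RtoC ra + ip_phase p b * (RtoC ra - RtoC rb))%C
    by ring.
  eapply Rle_trans; [apply Cmod_triangle|].
  rewrite <- RtoC_minus; unfold ip_phase at 3.
  rewrite !Cmod_mult, Cmod_cexpi, !Cmod_R, Rmult_1_l.
  rewrite (Rabs_right ra) by (apply Rle_ge, rpow_nonneg).
  pose proof (Cmod_ip_phase_sub p a b); pose proof (rpow_nonneg (Rabs p) a).
  apply Rplus_le_compat_r, Rmult_le_compat_r; auto.
Qed.

Lemma continuous_ip_pow (a p0 : R) : 0 <= a -> continuous (fun p => ip_pow p a) p0.
Proof.
  intros Ha; destruct (Req_dec a 0) as [->|Ha0].
  { apply (continuous_ext (fun _ => RtoC 1)); [|apply continuous_const].
    intros p; rewrite ip_pow_polar, rpow_0_r by apply Rabs_pos.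
    unfold ip_phase, cexpi, RtoC, Cmult; destruct (Rle_dec 0 p); simpl;
      rewrite ?Rmult_0_l, ?Rdiv_0_l, ?Ropp_0, cos_0, sin_0; f_equal; ring. }
  destruct (Req_dec p0 0) as [->|Hp0].
  - apply continuous_C_of_Cmod; intros eps Heps.
    exists (Rpower eps (/ a)); split; [apply exp_pos|]; intros y Hy.
    assert (E0 : ip_pow 0 a = RtoC 0)
      by (apply Cmod_eq_0; rewrite Cmod_ip_pow, Rabs_R0; apply rpow_0_l; lra).
    replace (ip_pow y a - ip_pow 0 a)%C with (ip_pow y a) by (rewrite E0; ring).
    rewrite Rminus_0_r in Hy; rewrite Cmod_ip_pow.
    destruct (Req_dec y 0) as [->|Hy0]; [rewrite Rabs_R0, rpow_0_l; lra|].
    rewrite rpow_Rpower by (apply Rabs_pos_lt, Hy0).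
    replace eps with (Rpower (Rpower eps (/ a)) a)
      by (rewrite Rpower_mult, Rinv_l, Rpower_1; lra).
    apply Rlt_Rpower_l; [lra|split; [apply Rabs_pos_lt|]; auto].
  - assert (Hp0' : 0 < Rabs p0) by (apply Rabs_pos_lt, Hp0).
    apply (continuous_ext_loc _ (fun p => ip_phase p0 a * RtoC (exp (a * ln (Rabs p))))%C).
    + exists (mkposreal _ Hp0'); intros p Hp; change (Rabs (p - p0) < Rabs p0) in Hp.
      assert (Hsign : 0 < p /\ 0 < p0 \/ p < 0 /\ p0 < 0)
        by (destruct (Rtotal_order p0 0) as [Hneg|[Heq|Hpos]]; [|contradiction|];
            [rewrite (Rabs_left p0) in Hp|rewrite (Rabs_right p0) in Hp]; try lra;
            apply Rabs_def2 in Hp; lra).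
      rewrite ip_pow_polar, rpow_Rpower by (apply Rabs_pos_lt; lra).
      unfold ip_phase, Rpower.
      destruct (Rle_dec 0 p), (Rle_dec 0 p0); try reflexivity; lra.
    + apply continuous_Cmult; [apply continuous_const|].
      apply (@ex_derive_continuous R_AbsRing C_R_NormedModule); eexists.
      apply (is_derive_C_pair (fun p => exp (a * ln (Rabs p))) (fun _ => 0));
        [|apply is_derive_const].
      apply Derive_correct; auto_derive; auto.
Qed.

Lemma Rpower_uniformly_near_1 (d L eta : R) : 0 < d -> 0 < eta ->
  exists delta, 0 < delta /\
    forall nu y, 0 <= nu < delta -> d <= y <= L -> Rabs (Rpower y nu - 1) <= eta.
Proof.
  intros Hd Heta.
  assert (Hexp : continuous exp 0)
    by (apply (@ex_derive_continuous R_AbsRing R_NormedModule); auto_derive; auto).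
  destruct (proj1 (filterlim_locally _ _) Hexp (mkposreal _ Heta)) as [delta0 Hnear].
  set (B := Rabs (ln d) + Rabs (ln L) + 1).
  pose proof (Rabs_pos (ln d)); pose proof (Rabs_pos (ln L)).
  assert (HB : 0 < B) by (unfold B; lra).
  exists (delta0 / B); split; [apply Rdiv_lt_0_compat; [apply cond_pos|lra]|]; intros nu y Hnu Hy.
  assert (Hln : Rabs (ln y) < B).
  { pose proof (ln_le d y Hd (proj1 Hy)); pose proof (ln_le y L ltac:(lra) (proj2 Hy)).
    pose proof (Rle_abs (ln L)); pose proof (Rle_abs (- ln d)); rewrite Rabs_Ropp in *.
    pose proof (Rabs_pos (ln d)); pose proof (Rabs_pos (ln L)).
    unfold B; apply Rabs_def1; lra. }
  unfold Rpower; rewrite <- exp_0; left; apply Hnear.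
  change (Rabs (nu * ln y - 0) < delta0); rewrite Rminus_0_r, Rabs_mult, (Rabs_right nu) by lra.
  apply Rle_lt_trans with (nu * B); [apply Rmult_le_compat_l; lra|].
  apply Rmult_lt_reg_r with (/ B); [apply Rinv_0_lt_compat; lra|].
  replace (nu * B * / B) with nu by (field; lra); destruct Hnu; unfold Rdiv in *; lra.
Qed.

Lemma rpow_shift_sub (y nu : R) (n : nat) : 0 < y ->
  rpow y (INR n + nu) - rpow y (INR n) = y ^ n * (Rpower y nu - 1).
Proof.
  intros Hy; rewrite !rpow_Rpower, Rpower_plus, Rpower_pow by lra; ring.
Qed.

Lemma Rabs_rpow_shift_sub_le_1 (y nu : R) (n : nat) : 0 <= y <= 1 -> 0 < nu ->
  Rabs (rpow y (INR n + nu) - rpow y (INR n)) <= 1.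
Proof.
  intros Hy Hnu; pose proof (pos_INR n).
  destruct (Req_dec y 0) as [->|Hy0].
  - rewrite rpow_0_l, rpow_INR by lra.
    destruct n; simpl; rewrite ?Rmult_0_l; rewrite Rminus_0_l, Rabs_Ropp, ?Rabs_R1, ?Rabs_R0; lra.
  - rewrite rpow_shift_sub, Rabs_mult, <- RPow_abs, Rabs_right by lra.
    pose proof (Rpower_le_1 y nu ltac:(lra) ltac:(lra)); pose proof (exp_pos (nu * ln y)).
    rewrite Rabs_left1 by lra.
    pose proof (pow_le y n ltac:(lra)); pose proof (pow_incr y 1 n ltac:(lra)); rewrite pow1 in *.
    unfold Rpower in *; nra.
Qed.

Lemma Rabs_rpow_shift_sub_le_pow_S (y nu : R) (n : nat) : 1 <= y -> 0 <= nu <= 1 ->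
  Rabs (rpow y (INR n + nu) - rpow y (INR n)) <= y ^ S n.
Proof.
  intros Hy Hnu; rewrite rpow_shift_sub by lra.
  pose proof (Rpower_between_1_and_base y nu Hy Hnu); pose proof (pow_le y n ltac:(lra)).
  rewrite Rabs_right by nra; simpl; nra.
Qed.

Lemma rpow_shift_sub_mul_le_near_0 (y Fy P0 nu d : R) (n : nat) :
  0 <= y < d -> d <= 1 -> 0 <= Fy <= P0 -> 0 < nu ->
  Rabs (rpow y (INR n + nu) - rpow y (INR n)) * Fy <= 2 * P0 / (1 + (y / d) ^ 2).
Proof.
  intros Hy Hd HF Hnu.
  set (T := Rabs (rpow y (INR n + nu) - rpow y (INR n))).
  assert (HT : 0 <= T <= 1) by (split; [apply Rabs_pos|apply Rabs_rpow_shift_sub_le_1; lra]).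
  assert (Hyd : 0 <= (y / d) ^ 2 <= 1).
  { split; [apply pow2_ge_0|].
    rewrite <- (pow1 2); apply pow_incr; split; [apply Rdiv_le_0_compat|apply Rle_div_l]; lra. }
  assert (HTF : 0 <= T * Fy <= P0).
  { split; [apply Rmult_le_pos; lra|].
    apply Rle_trans with (1 * Fy); [apply Rmult_le_compat_r|]; lra. }
  set (s := (y / d) ^ 2) in *.
  apply Rmult_le_reg_r with (1 + s); [lra|].
  replace (2 * P0 / (1 + s) * (1 + s)) with (2 * P0) by (field; apply Rgt_not_eq; lra).
  nra.
Qed.

Lemma rpow_shift_sub_mul_le_middle (y Fy Q0 nu eta : R) (n : nat) :
  0 < y -> 0 <= Fy -> y ^ n * Fy <= Q0 / (1 + y ^ 2) -> Rabs (Rpower y nu - 1) <= eta ->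
  Rabs (rpow y (INR n + nu) - rpow y (INR n)) * Fy <= eta * (Q0 / (1 + y ^ 2)).
Proof.
  intros Hy HF HQ0 Hnear.
  rewrite rpow_shift_sub, Rabs_mult, <- RPow_abs, (Rabs_right y) by lra.
  pose proof (pow_le y n (Rlt_le _ _ Hy)); pose proof (Rabs_pos (Rpower y nu - 1)).
  apply Rle_trans with (eta * (y ^ n * Fy)); [|apply Rmult_le_compat_l; lra].
  replace (y ^ n * Rabs (Rpower y nu - 1) * Fy)
    with (Rabs (Rpower y nu - 1) * (y ^ n * Fy)) by ring.
  apply Rmult_le_compat_r; nra.
Qed.

Lemma rpow_shift_sub_mul_le_far (y Fy Q2 nu L : R) (n : nat) :
  1 <= L < y -> 0 <= Fy -> y ^ (n + 2) * Fy <= Q2 / (1 + y ^ 2) -> 0 <= nu <= 1 ->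
  Rabs (rpow y (INR n + nu) - rpow y (INR n)) * Fy <= / L * (Q2 / (1 + y ^ 2)).
Proof.
  intros HL HF HQ2 Hnu.
  set (T := Rabs (rpow y (INR n + nu) - rpow y (INR n))).
  assert (HT : 0 <= T <= y ^ S n)
    by (split; [apply Rabs_pos|apply Rabs_rpow_shift_sub_le_pow_S; lra]).
  assert (Hpow : y ^ S n * L <= y ^ (n + 2)).
  { rewrite Nat.add_comm; simpl.
    assert (0 <= y * y ^ n) by (apply Rmult_le_pos; [|apply pow_le]; lra); nra. }
  apply Rmult_le_reg_l with L; [lra|].
  rewrite <- (Rmult_assoc L (/ L)), Rinv_r, Rmult_1_l by lra.
  apply Rle_trans with (y ^ S n * L * Fy); [|apply Rle_trans with (y ^ (n + 2) * Fy); auto].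
  - replace (y ^ S n * L * Fy) with (L * (y ^ S n * Fy)) by ring.
    apply Rmult_le_compat_l; [lra|apply Rmult_le_compat_r; lra].
  - apply Rmult_le_compat_r; lra.
Qed.

Lemma rpow_shift_sub_majorant (y Fy P0 Q0 Q2 nu d L eta : R) (n : nat) :
  0 <= y -> 0 <= Fy <= P0 -> 0 <= Q0 -> 0 <= Q2 ->
  y ^ n * Fy <= Q0 / (1 + y ^ 2) -> y ^ (n + 2) * Fy <= Q2 / (1 + y ^ 2) ->
  0 < nu <= 1 -> 0 < d <= 1 -> 1 <= L -> 0 <= eta ->
  (forall z, d <= z <= L -> Rabs (Rpower z nu - 1) <= eta) ->
  Rabs (rpow y (INR n + nu) - rpow y (INR n)) * Fy
  <= (eta * Q0 + Q2 / L) / (1 + y ^ 2) + 2 * P0 / (1 + (y / d) ^ 2).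
Proof.
  intros Hy HF HQ0 HQ2 H0 H2 Hnu Hd HL Heta Hnear.
  assert (Hden : 0 < 1 + y ^ 2) by nra.
  assert (Hmid : 0 <= eta * (Q0 / (1 + y ^ 2)))
    by (apply Rmult_le_pos; [|apply Rdiv_le_0_compat]; lra).
  assert (Hfar : 0 <= / L * (Q2 / (1 + y ^ 2)))
    by (apply Rmult_le_pos; [left; apply Rinv_0_lt_compat|apply Rdiv_le_0_compat]; lra).
  assert (Hnear0 : 0 <= 2 * P0 / (1 + (y / d) ^ 2)) by (apply Rdiv_le_0_compat; nra).
  replace ((eta * Q0 + Q2 / L) / (1 + y ^ 2))
    with (eta * (Q0 / (1 + y ^ 2)) + / L * (Q2 / (1 + y ^ 2)))
    by (field; lra).
  destruct (Rlt_or_le y d) as [Hyd|Hdy]; [|destruct (Rle_or_lt y L) as [HyL|HLy]].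
  - pose proof (rpow_shift_sub_mul_le_near_0 y Fy P0 nu d n ltac:(lra) ltac:(lra) HF ltac:(lra)).
    lra.
  - pose proof (rpow_shift_sub_mul_le_middle y Fy Q0 nu eta n ltac:(lra) ltac:(lra) H0
                  (Hnear y (conj Hdy HyL))); lra.
  - pose proof (rpow_shift_sub_mul_le_far y Fy Q2 nu L n ltac:(lra) ltac:(lra) H2 ltac:(lra)); lra.
Qed.

(** * Convergence of [D^(n + nu) f] to [D^n f] *)

Definition fracD_integrand (f : R -> C) (a x p : R) : C :=
  (cexpi (p * x) * ip_pow p a * fourier f p)%C.

Lemma Cmod_fracD_integrand (f : R -> C) (a x p : R) :
  Cmod (fracD_integrand f a x p) = rpow (Rabs p) a * Cmod (fourier f p).
Proof.
  unfold fracD_integrand.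
  now rewrite <- Cmult_assoc, Cmod_cexpi_mul, Cmod_mult, Cmod_ip_pow.
Qed.

Lemma is_RInt_gen_fracD_integrand (f : R -> C) (n : nat) (a x : R) : schwartz f ->
  INR n <= a <= INR n + 1 ->
  @is_RInt_gen C_R_NormedModule (fracD_integrand f a x) at_m_infty at_p_infty
    (int_R (fracD_integrand f a x)).
Proof.
  intros Hf Ha; pose proof (pos_INR n).
  destruct (fourier_lorentz_bound f n Hf) as [Q0 [_ H0]].
  destruct (fourier_lorentz_bound f (S n) Hf) as [Q1 [_ H1]].
  apply (@RInt_gen_correct C_R_CompleteNormedModule);
    [apply Proper_StrongProper, Rbar_locally_filter..|].
  apply (ex_RInt_gen_of_lorentz_bound _ (Q0 + Q1)).
  - intros u v; apply (@ex_RInt_continuous C_R_CompleteNormedModule); intros p _.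
    apply continuous_Cmult; [apply continuous_Cmult|].
    + apply continuous_cexpi_comp; auto_derive; auto.
    + apply continuous_ip_pow; lra.
    + apply continuous_fourier, Hf.
  - intros p; rewrite <- Cmod_norm, Cmod_fracD_integrand.
    pose proof (rpow_le_pow_add_pow_S (Rabs p) a n (Rabs_pos p) Ha).
    pose proof (Cmod_ge_0 (fourier f p)).
    specialize (H0 p); specialize (H1 p).
    apply Rle_trans with ((Rabs p ^ n + Rabs p ^ S n) * Cmod (fourier f p));
      [apply Rmult_le_compat_r; auto|].
    unfold Rdiv in *; lra.
Qed.

Lemma Cmod_fracD_integrand_sub (f : R -> C) (n : nat) (nu x p : R) : 0 < nu <= 1 ->
  Cmod (fracD_integrand f (INR n + nu) x p - fracD_integrand f (INR n) x p)%C
  <= (PI * nu * (Rabs p ^ n + Rabs p ^ S n)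
      + Rabs (rpow (Rabs p) (INR n + nu) - rpow (Rabs p) (INR n))) * Cmod (fourier f p).
Proof.
  intros Hnu; pose proof PI_RGT_0; pose proof (pos_INR n).
  unfold fracD_integrand.
  replace (cexpi (p * x) * ip_pow p (INR n + nu) * fourier f p
           - cexpi (p * x) * ip_pow p (INR n) * fourier f p)%C
    with (cexpi (p * x) * ((ip_pow p (INR n + nu) - ip_pow p (INR n)) * fourier f p))%C by ring.
  rewrite Cmod_cexpi_mul, Cmod_mult.
  apply Rmult_le_compat_r; [apply Cmod_ge_0|].
  eapply Rle_trans; [apply Cmod_ip_pow_sub|].
  replace (INR n + nu - INR n) with nu by ring; rewrite (Rabs_right nu) by lra.
  apply Rplus_le_compat_r, Rmult_le_compat_l; [nra|].
  apply rpow_le_pow_add_pow_S; [apply Rabs_pos|lra].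
Qed.

Section FracDShift.

Variables (f : R -> C) (n : nat) (P0 Q0 Q1 Q2 : R).
Hypothesis f_schwartz : schwartz f.
Hypothesis fourier_le_P0 : forall p, Cmod (fourier f p) <= P0.
Hypothesis fourier_le_Q0 : forall p, Rabs p ^ n * Cmod (fourier f p) <= Q0 / (1 + p ^ 2).
Hypothesis fourier_le_Q1 : forall p, Rabs p ^ S n * Cmod (fourier f p) <= Q1 / (1 + p ^ 2).
Hypothesis fourier_le_Q2 : forall p, Rabs p ^ (n + 2) * Cmod (fourier f p) <= Q2 / (1 + p ^ 2).
Hypotheses (Q0_nonneg : 0 <= Q0) (Q2_nonneg : 0 <= Q2).

Variables (nu d L eta : R).
Hypotheses (nu_range : 0 < nu <= 1) (d_range : 0 < d <= 1).
Hypotheses (L_ge_1 : 1 <= L) (eta_nonneg : 0 <= eta).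
Hypothesis Rpower_nu_near_1 : forall z, d <= z <= L -> Rabs (Rpower z nu - 1) <= eta.

Lemma fracD_integrand_sub_majorant (x p : R) :
  Cmod (fracD_integrand f (INR n + nu) x p - fracD_integrand f (INR n) x p)%C
  <= (PI * nu * (Q0 + Q1) + eta * Q0 + Q2 / L) / (1 + p ^ 2) + 2 * P0 / (1 + (p / d) ^ 2).
Proof.
  eapply Rle_trans; [apply Cmod_fracD_integrand_sub, nu_range|].
  pose proof PI_RGT_0.
  pose proof (rpow_shift_sub_majorant (Rabs p) (Cmod (fourier f p)) P0 Q0 Q2 nu d L eta n
    (Rabs_pos p) (conj (Cmod_ge_0 _) (fourier_le_P0 p)) Q0_nonneg Q2_nonneg) as Hshift.
  rewrite pow2_abs in Hshift.
  specialize (Hshift (fourier_le_Q0 p) (fourier_le_Q2 p) nu_range d_range L_ge_1 eta_nonneg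
                     Rpower_nu_near_1).
  replace ((Rabs p / d) ^ 2) with ((p / d) ^ 2) in Hshift
    by (unfold Rdiv; rewrite !Rpow_mult_distr, pow2_abs; reflexivity).
  assert (H01 : PI * nu * (Rabs p ^ n + Rabs p ^ S n) * Cmod (fourier f p)
                <= PI * nu * ((Q0 + Q1) / (1 + p ^ 2))).
  { rewrite Rmult_assoc; apply Rmult_le_compat_l; [nra|].
    pose proof (fourier_le_Q0 p); pose proof (fourier_le_Q1 p); unfold Rdiv in *; nra. }
  replace ((PI * nu * (Q0 + Q1) + eta * Q0 + Q2 / L) / (1 + p ^ 2))
    with (PI * nu * ((Q0 + Q1) / (1 + p ^ 2)) + (eta * Q0 + Q2 / L) / (1 + p ^ 2))
    by (field; split; [lra|nra]).
  lra.
Qed.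

Lemma Cmod_fracD_shift_sub_le (x : R) :
  Cmod (fracD (INR n + nu) f x - fracD (INR n) f x)%C
  <= (PI * nu * (Q0 + Q1) + eta * Q0 + Q2 / L + 2 * P0 * d) * PI.
Proof.
  pose proof inv_sqrt_2PI_bounds; pose proof (pos_INR n).
  set (I := fun a => int_R (fracD_integrand f a x)).
  assert (Hle : Cmod (Cminus (I (INR n + nu)) (I (INR n)))
                <= (PI * nu * (Q0 + Q1) + eta * Q0 + Q2 / L + 2 * P0 * d) * PI).
  { rewrite Cmod_norm.
    apply (@norm_is_RInt_gen_le_lorentz C_R_CompleteNormedModule
             (fun p => minus (fracD_integrand f (INR n + nu) x p) (fracD_integrand f (INR n) x p))
             _ (2 * P0) d _ (proj1 d_range)).
    - apply (@is_RInt_gen_minus C_R_NormedModule at_m_infty at_p_infty _ _);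
        apply (is_RInt_gen_fracD_integrand f n); auto; lra.
    - intros p; rewrite <- Cmod_norm; apply fracD_integrand_sub_majorant. }
  set (c := / sqrt (2 * PI)).
  change (Cmod (Cminus (Cmult c (I (INR n + nu))) (Cmult c (I (INR n))))
          <= (PI * nu * (Q0 + Q1) + eta * Q0 + Q2 / L + 2 * P0 * d) * PI).
  replace (Cminus (Cmult c (I (INR n + nu))) (Cmult c (I (INR n))))
    with (Cmult c (Cminus (I (INR n + nu)) (I (INR n)))) by ring.
  rewrite Cmod_mult, Cmod_R, Rabs_right by (unfold c; lra).
  pose proof (Cmod_ge_0 (Cminus (I (INR n + nu)) (I (INR n)))); unfold c in *; nra.
Qed.

End FracDShift.

Lemma Rmult_lt_eps_quarter (a t eps : R) : 0 <= a -> 0 < eps -> 0 <= t <= eps / (4 * a + 1) ->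
  a * t < eps / 4.
Proof.
  intros Ha Heps Ht.
  apply Rle_lt_trans with (a * (eps / (4 * a + 1))); [apply Rmult_le_compat_l; lra|].
  apply Rmult_lt_reg_r with (4 * (4 * a + 1)); [lra|].
  replace (a * (eps / (4 * a + 1)) * (4 * (4 * a + 1))) with (4 * a * eps) by (field; lra).
  replace (eps / 4 * (4 * (4 * a + 1))) with (4 * a * eps + eps) by field; lra.
Qed.

Lemma fracD_nat_shift_near (f : R -> C) (n : nat) : schwartz f ->
  forall eps, 0 < eps -> exists delta, 0 < delta /\ forall nu, 0 < nu < delta ->
    forall x, Cmod (fracD (INR n + nu) f x - fracD (INR n) f x)%C < eps.
Proof.
  intros Hf eps Heps; pose proof PI_RGT_0.
  destruct (fourier_bounded f Hf) as [P0 HP0].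
  assert (P0_nonneg : 0 <= P0) by (eapply Rle_trans; [apply Cmod_ge_0|apply (HP0 0)]).
  destruct (fourier_lorentz_bound f n Hf) as [Q0 [HQ0 H0]].
  destruct (fourier_lorentz_bound f (S n) Hf) as [Q1 [HQ1 H1]].
  destruct (fourier_lorentz_bound f (n + 2) Hf) as [Q2 [HQ2 H2]].
  (* d, L, eta and delta make each term of the bound of [Cmod_fracD_shift_sub_le] < eps/4. *)
  assert (Hpos : forall a, 0 <= a -> 0 < eps / (4 * a + 1))
    by (intros; apply Rdiv_lt_0_compat; lra).
  set (d := Rmin 1 (eps / (4 * (2 * P0 * PI) + 1))).
  set (L := Rmax 1 ((4 * (Q2 * PI) + 1) / eps)).
  set (eta := eps / (4 * (Q0 * PI) + 1)).
  assert (Hd : 0 < d <= 1)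
    by (split; [apply Rmin_glb_lt; [lra|apply Hpos; nra]|apply Rmin_l]).
  assert (HL : 1 <= L) by apply Rmax_l.
  assert (Heta : 0 < eta) by (apply Hpos; nra).
  destruct (Rpower_uniformly_near_1 d L eta (proj1 Hd) Heta) as [delta1 [Hdelta1 Hnear]].
  set (a1 := PI * PI * (Q0 + Q1)).
  exists (Rmin (Rmin delta1 1) (eps / (4 * a1 + 1))); split.
  { apply Rmin_glb_lt; [apply Rmin_glb_lt; lra|apply Hpos; unfold a1; nra]. }
  intros nu [Hnu0 Hnu] x.
  pose proof (Rmin_l (Rmin delta1 1) (eps / (4 * a1 + 1))).
  pose proof (Rmin_r (Rmin delta1 1) (eps / (4 * a1 + 1))).
  pose proof (Rmin_l delta1 1); pose proof (Rmin_r delta1 1).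
  eapply Rle_lt_trans.
  { apply (Cmod_fracD_shift_sub_le f n P0 Q0 Q1 Q2 Hf HP0 H0 H1 H2 HQ0 HQ2 nu d L eta); try lra.
    intros z Hz; apply Hnear; [lra|exact Hz]. }
  assert (E1 : a1 * nu < eps / 4) by (apply Rmult_lt_eps_quarter; [unfold a1; nra|lra|lra]).
  assert (E2 : Q0 * PI * eta < eps / 4)
    by (apply Rmult_lt_eps_quarter; [nra|lra|split; [lra|apply Rle_refl]]).
  assert (E3 : Q2 * PI * / L < eps / 4).
  { apply Rmult_lt_eps_quarter; [nra|lra|split; [left; apply Rinv_0_lt_compat; lra|]].
    rewrite <- (Rinv_div (4 * (Q2 * PI) + 1) eps).
    apply Rinv_le_contravar; [apply Rdiv_lt_0_compat; nra|apply Rmax_r]. }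
  assert (E4 : 2 * P0 * PI * d < eps / 4)
    by (apply Rmult_lt_eps_quarter; [nra|lra|split; [lra|apply Rmin_r]]).
  replace ((PI * nu * (Q0 + Q1) + eta * Q0 + Q2 / L + 2 * P0 * d) * PI)
    with (a1 * nu + Q0 * PI * eta + Q2 * PI * / L + 2 * P0 * PI * d) by (unfold a1; field; lra).
  lra.
Qed.

Theorem theorem3 (f : R -> C) (n : nat) (hf : schwartz f) :
  forall eps : R, 0 < eps ->
  exists N : nat, forall k : nat, (N <= k)%nat -> (1 <= k)%nat ->
    forall x : R,
      Cmod (Cminus (fracD (INR n + / INR k) f x) (fracD (INR n) f x)) < eps.
Proof.
  intros eps Heps.
  destruct (fracD_nat_shift_near f n hf eps Heps) as [delta [Hdelta Hnear]].
  destruct (INR_unbounded (/ delta)) as [N HN].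
  exists N; intros k HNk Hk x.
  assert (Hk0 : 0 < INR k) by (apply lt_0_INR; lia).
  assert (HNk' : INR N <= INR k) by (apply le_INR, HNk).
  apply Hnear; split; [apply Rinv_0_lt_compat, Hk0|].
  rewrite <- (Rinv_inv delta); apply Rinv_lt_contravar; [|lra].
  apply Rmult_lt_0_compat; [apply Rinv_0_lt_compat|]; lra.
Qed.
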